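(* Let $A$ be a set and let $\mathcal{E}$ be a set of subsets of $A$ such that (C1) for every $K\subseteq A$, $K\in\mathcal{E}$ if and only if $A\setminus K\notin\mathcal{E}$; and (C2) if $K\in\mathcal{E}$ and $K\subseteq L\subseteq A$, then $L\in\mathcal{E}$. Suppose each member of $A$ chooses one of the six strict total orders on three candidates $a,b,c$, labelled by $\mathbb{Z}/6\mathbb{Z}$ as: $1: a>b>c$, $2: a>c>b$, $3: c>a>b$, $4: c>b>a$, $5: b>c>a$, $6: b>a>c$. For $p\in\mathbb{Z}/6\mathbb{Z}$ let $K(p)$ be the set of members who chose ranking $p$, $K(p,q)=K(p)\cup K(q)$ and $K(p,q,r)=K(p)\cup K(q)\cup K(r)$. If (T) there exists $p$ with $K(p,p+1)\in\mathcal{E}$, then (V) there exists $p$ such that both $K(p,p+1,p+2)\in\mathcal{E}$ and $K(p+1,p+2,p+3)\in\mathcal{E}$.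
   Context: Indices are taken modulo $6$. *)

From mathcomp Require Import all_boot all_algebra.
Set Implicit Arguments. Unset Strict Implicit. Unset Printing Implicit Defensive.
Import GRing.Theory.
Local Open Scope ring_scope.

Definition subsetProp {A : Type} (K L : A -> Prop) : Prop := forall x, K x -> L x.
Definition complP {A : Type} (K : A -> Prop) : A -> Prop := fun x => ~ K x.

(* Rankings of three candidates a, b, c are labelled by 'Z_6, indices mod 6:
   1: a>b>c, 2: a>c>b, 3: c>a>b, 4: c>b>a, 5: b>c>a, 6 (= 0 mod 6): b>a>c.
   [choice x] is the label of the ranking chosen by member x. *)
Definition Kp {A : Type} (choice : A -> 'Z_6) (p : 'Z_6) : A -> Prop :=
  fun x => choice x = p.
Definition K2 {A : Type} (choice : A -> 'Z_6) (p q : 'Z_6) : A -> Prop :=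
  fun x => Kp choice p x \/ Kp choice q x.
Definition K3 {A : Type} (choice : A -> 'Z_6) (p q r : 'Z_6) : A -> Prop :=
  fun x => Kp choice p x \/ Kp choice q x \/ Kp choice r x.

From mathcomp Require Import all_boot all_algebra.
From Stdlib Require Import Classical.
Set Implicit Arguments.
Unset Strict Implicit.
Unset Printing Implicit Defensive.

Local Open Scope ring_scope.

(* Supersets of K(p,p+1) are in E, in particular K(p,p+1,p+2) and
   K(p-1,p,p+1).  By (C1) either K(p+1,p+2,p+3) is in E, and p works, or its
   complement K(p-2,p-1,p) is, and then p-2 works. *)

Section DecisiveFamily.

Variables (A : Type) (E : (A -> Prop) -> Prop).
Hypothesis C1 : forall K : A -> Prop, E K <-> ~ E (complP K).

Lemma E_or_complP (K : A -> Prop) : E K \/ E (complP K).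
Proof.
have [EcK | NEcK] := classic (E (complP K)); first by right.
by left; apply/C1.
Qed.

End DecisiveFamily.

Section Rankings.

Variables (A : Type) (choice : A -> 'Z_6).

Lemma K2E p q x : K2 choice p q x <-> choice x \in [:: p; q].
Proof.
rewrite /K2 /Kp !inE; split; first by case=> ->; rewrite eqxx ?orbT.
by case/orP=> /eqP; [left | right].
Qed.

Lemma K3E p q r x : K3 choice p q r x <-> choice x \in [:: p; q; r].
Proof.
rewrite /K3 /Kp !inE; split; first by case=> [|[]] ->; rewrite eqxx ?orbT.
by case/or3P=> /eqP; tauto.
Qed.

Lemma K2_sub_K3 p q r : subsetProp (K2 choice p q) (K3 choice p q r).
Proof. by move=> x [] Kx; [left | right; left]. Qed.

Lemma K2_sub_K3_of_subset p q p' q' r' :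
  {subset [:: p; q] <= [:: p'; q'; r']} ->
  subsetProp (K2 choice p q) (K3 choice p' q' r').
Proof. by move=> sub x /K2E /sub /K3E. Qed.

Lemma complP_K3_sub_K3 p q r p' q' r' :
  (forall y, y \notin [:: p; q; r] -> y \in [:: p'; q'; r']) ->
  subsetProp (complP (K3 choice p q r)) (K3 choice p' q' r').
Proof.
move=> sub x notK; apply/K3E/sub/negP => /K3E; exact: notK.
Qed.

End Rankings.

Lemma Z6_pair_sub_prev (p : 'Z_6) :
  {subset [:: p; p + 1] <= [:: p - 2 + 1; p - 2 + 2; p - 2 + 3]}.
Proof.
by apply/allP; case: p => -[|[|[|[|[|[|//]]]]]] ?.
Qed.

Lemma Z6_notin_triple (p y : 'Z_6) :
  y \notin [:: p + 1; p + 2; p + 3] -> y \in [:: p - 2; p - 2 + 1; p - 2 + 2].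
Proof.
by case: p => -[|[|[|[|[|[|//]]]]]] ?; case: y => -[|[|[|[|[|[|//]]]]]] ?.
Qed.

Theorem mainTheorem2 (A : Type) (E : (A -> Prop) -> Prop)
  (C1 : forall K : A -> Prop, E K <-> ~ E (complP K))
  (C2 : forall K L : A -> Prop, E K -> subsetProp K L -> E L)
  (choice : A -> 'Z_6)
  (T : exists p : 'Z_6, E (K2 choice p (p + 1))) :
  exists p : 'Z_6,
    E (K3 choice p (p + 1) (p + 2)) /\ E (K3 choice (p + 1) (p + 2) (p + 3)).
Proof.
case: T => p Ep.
have Enext : E (K3 choice p (p + 1) (p + 2)) by apply: C2 Ep (K2_sub_K3 (p + 2)).
have Eprev : E (K3 choice (p - 2 + 1) (p - 2 + 2) (p - 2 + 3)).
  exact: C2 Ep (K2_sub_K3_of_subset (@Z6_pair_sub_prev p)).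
have [Eshift | Ecompl] := E_or_complP C1 (K3 choice (p + 1) (p + 2) (p + 3)).
  by exists p.
exists (p - 2); split => //.
exact: C2 Ecompl (complP_K3_sub_K3 (@Z6_notin_triple p)).
Qed.
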